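(* Let $G$ be a connected weighted multigraph on the vertex set $V$, $|V|\ge2$, with positive edge weights, and let $\tilde G$ be any balance-graph of $G$. Then for all $i,j\in V$ the resistance distance between $i$ and $j$ in $G$ equals the long walk distance $d^{LW}(i,j)$ computed in $\tilde G$.
   Context: Loops and multiple edges are allowed. The weighted adjacency matrix $A(H)=(a_{ij})$ of a graph $H$ has $a_{ij}$ equal to the sum of weights of the edges joining $i$ and $j$; its Laplacian is $L(H)=\operatorname{diag}(A(H)\mathbf 1)-A(H)$. The resistance distance in $G$ is $d^r(i,j)=(e_i-e_j)^{\mathsf T}L(G)^{+}(e_i-e_j)$, where $L^+$ is the Moore–Penrose inverse and $e_i$ the standard basis vectors (equivalently, the effective resistance when each edge is a resistor of conductance equal to its weight). A balance-graph of $G$ is a graph $\tilde G$ with the same vertices, containing the edges of $G$ with the same weights, whose additional edges are all loops with positive weights, and whose weighted adjacency matrix has constant row sums. For a connected graph $H$ on $n$ vertices with adjacency matrix $B$ and spectral radius $\rho$, the long walk distance is $d^{LW}(i,j)=\lim_{\alpha\to\infty}\theta\bigl(\tfrac12(\ln r_{ii}+\ln r_{jj})-\ln r_{ij}\bigr)$, where $(r_{ij})=(I-tB)^{-1}$, $t=(\rho+\alpha^{-1})^{-1}$, and $\theta=\ln(e+\alpha^{2/n})\frac{\alpha-1}{\ln\alpha}$. *)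

From HB Require Import structures.
From Stdlib Require Import ClassicalEpsilon.
From mathcomp Require Import all_boot all_order all_algebra.
From mathcomp Require Import all_classical all_reals all_analysis.
Set Implicit Arguments. Unset Strict Implicit. Unset Printing Implicit Defensive.
Import Order.TTheory GRing.Theory Num.Theory.
Local Open Scope ring_scope.
Import numFieldNormedType.Exports.
Local Open Scope classical_set_scope.

(* A weighted multigraph (loops and multiple edges allowed) on the vertex
   set 'I_n is a finite list of edges (i, j, w): an edge joining i and j with
   weight w. *)
Definition edge (R : realType) (n : nat) := ('I_n * 'I_n * R)%type.

Definition pos_weights (R : realType) n (E : seq (edge R n)) : Prop :=
  forall e, e \in E -> 0 < e.2.

Definition joins (R : realType) n (e : edge R n) (i j : 'I_n) : bool :=
  ((e.1.1 == i) && (e.1.2 == j)) || ((e.1.1 == j) && (e.1.2 == i)).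

Definition adjmx (R : realType) n (E : seq (edge R n)) : 'M[R]_n :=
  \matrix_(i, j) \sum_(e <- E | joins e i j) e.2.

Definition laplacian (R : realType) n (A : 'M[R]_n) : 'M[R]_n :=
  diag_mx (\row_i \sum_k A i k) - A.

Definition connected_graph (R : realType) n (E : seq (edge R n)) : Prop :=
  forall i j : 'I_n, connect [rel x y | has (fun e => joins e x y) E] i j.

Definition is_balance_graph (R : realType) n (E Et : seq (edge R n)) : Prop :=
  exists loops : seq ('I_n * R),
    [/\ forall l, l \in loops -> 0 < l.2,
        Et = E ++ [seq (l.1, l.1, l.2) | l <- loops] &
        exists c : R, forall i : 'I_n, \sum_j adjmx Et i j = c].

(* Moore--Penrose inverse: the (unique) matrix satisfying the four Penrose
   equations (real case, so conjugate transpose = transpose). *)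
Definition is_MP_inverse (R : realType) n (A X : 'M[R]_n) : Prop :=
  [/\ A *m X *m A = A, X *m A *m X = X,
      (A *m X)^T = A *m X & (X *m A)^T = X *m A].

Definition MPinv (R : realType) n (A : 'M[R]_n) : 'M[R]_n :=
  epsilon (inhabits (0 : 'M[R]_n)) (is_MP_inverse A).

Definition basis_vec (R : realType) n (i : 'I_n) : 'cV[R]_n := delta_mx i 0.

Definition resistance_dist (R : realType) n (E : seq (edge R n)) (i j : 'I_n) : R :=
  let u := basis_vec R i - basis_vec R j in
  ((u^T *m MPinv (laplacian (adjmx E)) *m u) 0 0).

(* spectral radius of a (symmetric) real matrix: the largest modulus of an
   eigenvalue (all eigenvalues of a real symmetric matrix are real) *)
Definition spectral_radius (R : realType) n (B : 'M[R]_n) : R :=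
  sup [set `|a| | a in [set a : R | eigenvalue B a]].

Definition long_walk_expr (R : realType) n (B : 'M[R]_n) (i j : 'I_n)
  (alpha : R) : R :=
  let t := (spectral_radius B + alpha^-1)^-1 in
  let r := invmx (1%:M - t *: B) in
  let theta := ln (expR 1 + alpha `^ (2 / n%:R)) * ((alpha - 1) / ln alpha) in
  theta * (2^-1 * (ln (r i i) + ln (r j j)) - ln (r i j)).

Definition long_walk_dist_is (R : realType) n (E : seq (edge R n)) (i j : 'I_n)
  (d : R) : Prop :=
  (long_walk_expr (adjmx E) i j : R -> R) @ +oo%R --> d.

From Stdlib Require Import ClassicalEpsilon.
From mathcomp Require Import all_boot all_order all_algebra.
From mathcomp Require Import all_classical all_reals all_analysis.
From mathcomp Require Import ring lra.
Set Implicit Arguments. Unset Strict Implicit. Unset Printing Implicit Defensive.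
Import Order.TTheory GRing.Theory Num.Theory.
Local Open Scope ring_scope.
Import numFieldNormedType.Exports.
Local Open Scope classical_set_scope.

(* Adding loops only changes the diagonal of the adjacency matrix, so G and any balance-graph
   G~ have the same Laplacian L = c I - A~, where c is the common row sum of A~; c is also the
   spectral radius of A~. With J = (1/n) 1 1^T, the matrix X = (L + J)^-1 - J is the
   Moore-Penrose inverse of L (connectivity makes the kernel of L the constants), so the
   resistance distance is X_ii - X_ij - X_ji + X_jj. For t = (c + 1/a)^-1 and
   s = 1 - t c = 1 / (c a + 1),
     (I - t A~)^-1 = c a J + (t L + s (I - J) + J)^-1,
   and the last inverse tends to c X + J as a -> +oo. So r_ab = (c/n) a + W_ab(a) with W(a)
   converging, the ln a terms cancel in the long walk expression, and since theta ~ (2/n) a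
   the limit is (2/c) ((cX + J)_ii / 2 + (cX + J)_jj / 2 - (cX + J)_ij), the resistance. *)

Section Adjacency.
Variables (R : realType) (n : nat).
Implicit Types (E : seq (edge R n)) (i j : 'I_n).

Lemma joinsC (e : edge R n) i j : joins e i j = joins e j i.
Proof. by rewrite /joins orbC. Qed.

Lemma trmx_adjmx E : (adjmx E)^T = adjmx E.
Proof. by apply/matrixP => i j; rewrite !mxE; apply: eq_bigl => e; rewrite joinsC. Qed.

Lemma adjmx_ge0 E i j : pos_weights E -> 0 <= adjmx E i j.
Proof.
move=> wE; rewrite mxE big_seq_cond; apply: sumr_ge0 => e /andP[eE _].
exact/ltW/wE.
Qed.

Lemma adjmx_gt0 E i j :
  pos_weights E -> has (fun e => joins e i j) E -> 0 < adjmx E i j.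
Proof.
move=> wE /hasP[e eE eij]; rewrite lt_def adjmx_ge0 // andbT mxE big_seq_cond.
rewrite psumr_neq0 => [|f /andP[fE _]]; last exact/ltW/wE.
by apply/hasP; exists e; rewrite // eE eij wE.
Qed.

Lemma adjmx_cat E1 E2 : adjmx (E1 ++ E2) = adjmx E1 + adjmx E2.
Proof. by apply/matrixP => i j; rewrite !mxE big_cat. Qed.

Lemma adjmx_loops (l : seq ('I_n * R)) i j :
  i != j -> adjmx [seq (x.1, x.1, x.2) | x <- l] i j = 0.
Proof.
move=> ij; rewrite mxE big_map big1 // => x.
by rewrite /joins /=; case/orP => /andP[/eqP-> /eqP eq_ij]; rewrite eq_ij eqxx in ij.
Qed.

End Adjacency.

Section Laplacian.
Variables (R : realType) (n : nat).
Implicit Types (A D : 'M[R]_n).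

Lemma laplacian_rowsum A i : \sum_j laplacian A i j = 0.
Proof.
under eq_bigr do rewrite !mxE.
rewrite sumrB [X in X - _](bigD1 i) //= eqxx mulr1n [X in _ + X - _]big1 ?addr0 ?subrr // => j.
by rewrite eq_sym => /negPf ->.
Qed.

Lemma laplacian_sym A : A^T = A -> (laplacian A)^T = laplacian A.
Proof.
move=> /matrixP symA; apply/matrixP => i j; rewrite !mxE -[A i j]symA mxE eq_sym.
by case: eqVneq => [->|].
Qed.

Lemma laplacianD_diag A D :
  (forall i j, i != j -> D i j = 0) -> laplacian (A + D) = laplacian A.
Proof.
move=> offD; apply/matrixP => i j; rewrite !mxE.
have -> : \sum_k (A + D) i k = \sum_k A i k + D i i.
  under eq_bigr do rewrite mxE.
  rewrite big_split /=; congr (_ + _).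
  by rewrite (bigD1 i) //= big1 ?addr0 // => k ki; rewrite offD // eq_sym.
case: eqVneq => [<-|ij]; last by rewrite !mulr0n offD // addr0.
by rewrite !mulr1n; ring.
Qed.

Lemma laplacian_const_rowsum A c :
  (forall i, \sum_j A i j = c) -> laplacian A = c%:M - A.
Proof. by move=> rsA; apply/matrixP => i j; rewrite !mxE rsA. Qed.

Lemma row_mul_laplacian A (v : 'rV[R]_n) k : A^T = A ->
  (v *m laplacian A) 0 k = \sum_j A k j * (v 0 k - v 0 j).
Proof.
move=> /matrixP symA; rewrite mulmxBr mxE mul_mx_diag !mxE.
under [RHS]eq_bigr do rewrite mulrBr.
rewrite sumrB big_distrr /=; congr (_ - _); first by apply: eq_bigr => j _; rewrite mulrC.
by apply: eq_bigr => j _; rewrite -[A j k]symA mxE mulrC.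
Qed.

End Laplacian.

Lemma laplacian_ker_const (R : realType) n (E : seq (edge R n)) (v : 'rV[R]_n) :
  pos_weights E -> connected_graph E -> v *m laplacian (adjmx E) = 0 ->
  forall i j, v 0 i = v 0 j.
Proof.
move=> wE connE vL0 i j.
have [k _ vk_max] := @arg_maxP _ _ _ i xpredT (fun l => v 0 l) isT.
pose top := [pred l | v 0 l == v 0 k].
have top_nbr x y : x \in top -> has (fun e => joins e x y) E -> y \in top.
  move=> /eqP vx xy; have := row_mul_laplacian v x (trmx_adjmx E).
  rewrite vL0 mxE => /esym/eqP; rewrite psumr_eq0 => [|l _]; last first.
    by rewrite mulr_ge0 ?adjmx_ge0 // subr_ge0 vx; apply: vk_max.
  move=> /allP /(_ y (mem_index_enum y)) /=.
  by rewrite mulf_eq0 (gt_eqF (adjmx_gt0 wE xy)) subr_eq0 vx eq_sym.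
have top_closed : closed_mem [rel x y | has (fun e => joins e x y) E] (mem top).
  move=> x y /= xy; apply/idP/idP => [xtop|ytop]; first exact: (top_nbr x).
  by apply: (top_nbr y) => //; apply: sub_has xy => e; rewrite joinsC.
have top_all l : l \in top by rewrite -(closed_connect top_closed (connE k l)) inE.
by rewrite (eqP (top_all i)) (eqP (top_all j)).
Qed.

Lemma mulmx1_invmx (F : fieldType) n (A B : 'M[F]_n) : A *m B = 1%:M -> invmx A = B.
Proof.
move=> AB1; have [uA _] := mulmx1_unit AB1.
by rewrite -[invmx A]mulmx1 -AB1 mulmxA mulVmx // mul1mx.
Qed.

(* Locked, so that rewriting with scaling lemmas does not unfold it into a scaled constant. *)
Fact avg_mx_key : unit. Proof. by []. Qed.
Definition avg_mx (F : fieldType) n : 'M[F]_n :=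
  locked_with avg_mx_key (n%:R^-1 *: const_mx 1).

Definition lap_pinv (F : fieldType) n (L : 'M[F]_n) : 'M[F]_n :=
  invmx (L + avg_mx F n) - avg_mx F n.

Section LaplacianPseudoInverse.
Variables (F : numFieldType) (n : nat) (L : 'M[F]_n).
Hypotheses (n_gt0 : (0 < n)%N) (symL : L^T = L)
  (rowsumL : forall i, \sum_j L i j = 0)
  (kerL : forall v : 'rV[F]_n, v *m L = 0 -> forall i j, v 0 i = v 0 j).

Local Notation J := (avg_mx F n).
Local Notation X := (lap_pinv L).
Let ones : 'cV[F]_n := const_mx 1.

Lemma avg_mxE i j : J i j = n%:R^-1.
Proof. by rewrite [avg_mx _ _]unlock !mxE mulr1. Qed.

Let n_neq0 : n%:R != 0 :> F.
Proof. by rewrite pnatr_eq0 -lt0n. Qed.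

Lemma trmx_avg_mx : J^T = J.
Proof. by apply/matrixP => i j; rewrite mxE !avg_mxE. Qed.

Lemma avg_mx_ones : J *m ones = ones.
Proof.
apply/matrixP => i j; rewrite !mxE.
under eq_bigr do rewrite avg_mxE mxE mulr1.
by rewrite sumr_const card_ord -[LHS]mulr_natr mulVf.
Qed.

Lemma avg_mx_idem : J *m J = J.
Proof.
apply/matrixP => i j; rewrite mxE avg_mxE.
under eq_bigr do rewrite !avg_mxE.
by rewrite sumr_const card_ord -[LHS]mulr_natr -mulrA mulVf ?mulr1.
Qed.

Lemma mulmx_ones : L *m ones = 0.
Proof.
by apply/matrixP => i j; rewrite !mxE -[RHS](rowsumL i); apply: eq_bigr => k _; rewrite mxE mulr1.
Qed.

Lemma mulmx_avg_mx : L *m J = 0.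
Proof.
apply/matrixP => i j; rewrite !mxE.
under eq_bigr do rewrite avg_mxE.
by rewrite -big_distrl /= rowsumL mul0r.
Qed.

Lemma avg_mx_mulmx : J *m L = 0.
Proof. by apply: trmx_inj; rewrite trmx_mul symL trmx_avg_mx mulmx_avg_mx trmx0. Qed.

Lemma unitmx_addJ : L + J \in unitmx.
Proof.
rewrite -row_free_unit; apply: inj_row_free => v vLJ0.
have sum_v0 : \sum_k v 0 k = 0.
  have := congr1 (fun M => (M *m ones) 0 0) vLJ0.
  rewrite mul0mx -mulmxA mulmxDl mulmx_ones avg_mx_ones add0r !mxE.
  by under eq_bigr do rewrite mxE mulr1.
have vJ0 : v *m J = 0.
  apply/matrixP => i j; rewrite (ord1 i) !mxE; under eq_bigr do rewrite avg_mxE.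
  by rewrite -big_distrl /= sum_v0 mul0r.
have vL0 : v *m L = 0 by move: vLJ0; rewrite mulmxDr vJ0 addr0.
pose i0 := Ordinal n_gt0.
have v_i0 : v 0 i0 = 0.
  have : \sum_(k < n) v 0 i0 = 0.
    by rewrite -[RHS]sum_v0; apply: eq_bigr => k _; apply: kerL.
  rewrite sumr_const card_ord => /eqP.
  by rewrite mulrn_eq0 (negPf (lt0n_neq0 n_gt0)) => /eqP.
by apply/matrixP => i j; rewrite (ord1 i) (kerL vL0 j i0) v_i0 mxE.
Qed.

Let unitLJ := unitmx_addJ.

Lemma avg_mx_invmx_addJ : J *m invmx (L + J) = J.
Proof.
have JLJ : J *m (L + J) = J by rewrite mulmxDr avg_mx_mulmx avg_mx_idem add0r.
by rewrite -{1}JLJ -mulmxA mulmxV // mulmx1.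
Qed.

Lemma invmx_addJ_avg_mx : invmx (L + J) *m J = J.
Proof.
have LJJ : (L + J) *m J = J by rewrite mulmxDl mulmx_avg_mx avg_mx_idem add0r.
by rewrite -[X in _ *m X = _]LJJ mulmxA mulVmx // mul1mx.
Qed.

Lemma mulmx_lap_pinv : L *m X = 1%:M - J.
Proof.
rewrite mulmxBr mulmx_avg_mx subr0 -[LHS](addrK (J *m invmx (L + J))) -mulmxDl.
by rewrite mulmxV // avg_mx_invmx_addJ.
Qed.

Lemma lap_pinv_mulmx : X *m L = 1%:M - J.
Proof.
rewrite mulmxBl avg_mx_mulmx subr0 -[LHS](addrK (invmx (L + J) *m J)) -mulmxDr.
by rewrite mulVmx // invmx_addJ_avg_mx.
Qed.

Lemma avg_mx_lap_pinv : J *m X = 0.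
Proof. by rewrite mulmxBr avg_mx_invmx_addJ avg_mx_idem subrr. Qed.

Lemma trmx_lap_pinv : X^T = X.
Proof. by rewrite /lap_pinv linearB /= trmx_avg_mx trmx_inv linearD /= symL trmx_avg_mx. Qed.

Lemma mulmx_lap_pinvK : L *m X *m L = L.
Proof. by rewrite mulmx_lap_pinv mulmxBl mul1mx avg_mx_mulmx subr0. Qed.

Lemma lap_pinv_mulmxK : X *m L *m X = X.
Proof. by rewrite lap_pinv_mulmx mulmxBl mul1mx avg_mx_lap_pinv subr0. Qed.

Lemma lap_pinv_quad_form (Y : 'M[F]_n) (u : 'cV[F]_n) :
  L *m Y *m L = L -> J *m u = 0 -> u^T *m Y *m u = u^T *m X *m u.
Proof.
move=> LYL Ju0.
have [w ->] : exists w, u = L *m w.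
  by exists (X *m u); rewrite mulmxA mulmx_lap_pinv mulmxBl mul1mx Ju0 subr0.
have sandwich Z : (L *m w)^T *m Z *m (L *m w) = w^T *m (L *m Z *m L) *m w.
  by rewrite trmx_mul symL !mulmxA.
by rewrite !sandwich LYL mulmx_lap_pinvK.
Qed.

Lemma mulmx_scale_addJ (c : F) : c != 0 -> (c^-1 *: L + J) *m (c *: X + J) = 1%:M.
Proof.
move=> c0; rewrite mulmxDl !mulmxDr -!scalemxAl -!scalemxAr scalerA mulVf // scale1r.
by rewrite mulmx_lap_pinv mulmx_avg_mx avg_mx_lap_pinv avg_mx_idem !scaler0 addr0 add0r subrK.
Qed.

(* Unlike [1 - t (c - L)], the matrix [M] stays invertible as [s] tends to [0]. *)
Lemma invmx_resolvent (c t : F) :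
  let s := 1 - t * c in let M := t *: L + s *: (1%:M - J) + J in
  s != 0 -> M \in unitmx ->
  invmx (1%:M - t *: (c%:M - L)) = (s^-1 - 1) *: J + invmx M.
Proof.
move=> s M s0 uM; apply: mulmx1_invmx.
have MJ : M *m J = J.
  by rewrite !mulmxDl -!scalemxAl mulmx_avg_mx mulmxBl mul1mx avg_mx_idem subrr !scaler0 !add0r.
have JM : J *m M = J.
  by rewrite !mulmxDr -!scalemxAr avg_mx_mulmx mulmxBr mulmx1 avg_mx_idem subrr !scaler0 !add0r.
have JW : J *m invmx M = J by rewrite -{1}JM -mulmxA mulmxV // mulmx1.
have -> : 1%:M - t *: (c%:M - L) = M - (1 - s) *: J.
  by apply/matrixP => a b; rewrite /M /s !mxE; ring.
rewrite mulmxDr !mulmxBl -!scalemxAr -!scalemxAl MJ mulmxV // JW avg_mx_idem scalerA.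
by apply/matrixP => a b; rewrite !mxE; field.
Qed.

End LaplacianPseudoInverse.

Lemma is_MP_inverse_lap_pinv (R : realType) n (L : 'M[R]_n) :
  (0 < n)%N -> L^T = L -> (forall i, \sum_j L i j = 0) ->
  (forall v : 'rV[R]_n, v *m L = 0 -> forall i j, v 0 i = v 0 j) ->
  is_MP_inverse L (lap_pinv L).
Proof.
move=> n_gt0 symL rowsumL kerL.
split; [exact: mulmx_lap_pinvK | exact: lap_pinv_mulmxK | |].
- by rewrite mulmx_lap_pinv // linearB /= trmx1 trmx_avg_mx.
- by rewrite lap_pinv_mulmx // linearB /= trmx1 trmx_avg_mx.
Qed.

Lemma quad_form_basis_diff (R : realType) n (X : 'M[R]_n) i j :
  let u := basis_vec R i - basis_vec R j in
  (u^T *m X *m u) 0 0 = X i i - X i j - X j i + X j j.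
Proof.
have entry a b : ((basis_vec R a)^T *m X *m basis_vec R b) 0 0 = X a b.
  by rewrite /basis_vec trmx_delta -rowE -colE !mxE.
have entryB (M N : 'M[R]_1) : (M - N) 0 0 = M 0 0 - N 0 0 by rewrite !mxE.
by rewrite /= [_^T]linearB /= !mulmxBl !mulmxBr !entryB !entry; ring.
Qed.

Lemma avg_mx_basis_diff (R : realType) n (i j : 'I_n) :
  avg_mx R n *m (basis_vec R i - basis_vec R j) = 0.
Proof.
rewrite mulmxBr /basis_vec -!colE; apply/eqP; rewrite subr_eq0; apply/eqP/matrixP => a b.
by rewrite !mxE !avg_mxE.
Qed.

Lemma resistance_dist_lap_pinv (R : realType) n (E : seq (edge R n)) i j :
  (0 < n)%N -> pos_weights E -> connected_graph E ->
  let X := lap_pinv (laplacian (adjmx E)) in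
  resistance_dist E i j = X i i - X i j - X j i + X j j.
Proof.
move=> n_gt0 wE connE X; set L := laplacian (adjmx E).
have symL : L^T = L by apply/laplacian_sym/trmx_adjmx.
have kerL := laplacian_ker_const wE connE.
have [LYL _ _ _] : is_MP_inverse L (MPinv L).
  apply: (epsilon_spec (inhabits 0) (is_MP_inverse L)); exists X.
  exact: is_MP_inverse_lap_pinv (@laplacian_rowsum _ _ _) kerL.
rewrite /resistance_dist /= -/L.
by rewrite (lap_pinv_quad_form n_gt0 symL (@laplacian_rowsum _ _ _) kerL LYL)
  ?avg_mx_basis_diff // quad_form_basis_diff.
Qed.

Section SpectralRadius.
Variables (R : realType) (n : nat) (A : 'M[R]_n) (c : R).
Hypotheses (symA : A^T = A) (A_ge0 : forall i j, 0 <= A i j)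
  (rowsumA : forall i, \sum_j A i j = c).

Let symAe i j : A i j = A j i.
Proof. by rewrite -[in LHS]symA mxE. Qed.

Lemma eigenvalue_le_rowsum a : eigenvalue A a -> `|a| <= c.
Proof.
move=> /eigenvalueP[v va v_neq0].
have [l vl] : exists l, v 0 l != 0.
  apply/existsP; apply: contraNT v_neq0; rewrite negb_exists => /forallP v0.
  by apply/eqP/matrixP => i j; rewrite (ord1 i) mxE; apply/eqP/negPn/v0.
have [k _ vk_max] := @arg_maxP _ _ _ l xpredT (fun l => `|v 0 l|) isT.
have vk_gt0 : 0 < `|v 0 k| by apply: lt_le_trans (vk_max l isT); rewrite normr_gt0.
rewrite -(ler_pM2r vk_gt0) -normrM.
have -> : a * v 0 k = (v *m A) 0 k by rewrite va mxE.
rewrite mxE (le_trans (ler_norm_sum _ _ _)) // -(rowsumA k) mulrC big_distrr /=.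
apply: ler_sum => j _; rewrite normrM (ger0_norm (A_ge0 j k)) symAe mulrC.
by rewrite [leRHS]mulrC; apply: ler_wpM2l; [exact: A_ge0 | exact: vk_max].
Qed.

Lemma spectral_radius_const_rowsum : (0 < n)%N -> spectral_radius A = c.
Proof.
move=> n_gt0.
have c_ge0 : 0 <= c by rewrite -(rowsumA (Ordinal n_gt0)) sumr_ge0.
have eig_c : eigenvalue A c.
  apply/eigenvalueP; exists (const_mx 1).
    apply/matrixP => i k; rewrite !mxE -(rowsumA k) mulr1.
    by apply: eq_bigr => j _; rewrite mxE mul1r symAe.
  by apply/eqP => /matrixP /(_ 0 (Ordinal n_gt0)) /eqP; rewrite !mxE oner_eq0.
have c_in : [set `|a| | a in [set a : R | eigenvalue A a]] c.
  by exists c; rewrite ?ger0_norm.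
have ub_c : ubound [set `|a| | a in [set a : R | eigenvalue A a]] c.
  by move=> y [a /eigenvalue_le_rowsum ? <-].
apply/eqP; rewrite eq_le ge_sup //=; last by exists c.
exact: (ub_le_sup (ex_intro _ c ub_c)).
Qed.

End SpectralRadius.

Section MatrixLimits.
Context {R : realType} {T : Type} {F : set_system T} {FF : Filter F}.

Lemma cvg_det n (M : T -> 'M[R]_n) (M0 : 'M[R]_n) :
  (forall i j, M x i j @[x --> F] --> M0 i j) -> \det (M x) @[x --> F] --> \det M0.
Proof.
move=> M_cvg; rewrite /determinant.
apply: (cvg_big add_continuous) => // s _; apply: cvgMl_tmp.
by apply: (cvg_big mul_continuous) => // i _; apply: M_cvg.
Qed.

Lemma near_unitmx n (M : T -> 'M[R]_n) (M0 : 'M[R]_n) :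
  (forall i j, M x i j @[x --> F] --> M0 i j) -> M0 \in unitmx ->
  \forall x \near F, M x \in unitmx.
Proof.
move=> M_cvg; rewrite unitmxE unitfE => detM0.
by apply: filterS (cvgr_neq0 _ (cvg_det M_cvg) detM0) => x; rewrite unitmxE unitfE.
Qed.

Lemma cvg_invmx n (M : T -> 'M[R]_n) (M0 : 'M[R]_n) :
  (forall i j, M x i j @[x --> F] --> M0 i j) -> M0 \in unitmx ->
  forall i j, invmx (M x) i j @[x --> F] --> invmx M0 i j.
Proof.
move=> M_cvg uM0 i j.
have cvg_adj : \adj (M x) i j @[x --> F] --> \adj M0 i j.
  rewrite mxE /cofactor; under eq_cvg do rewrite mxE /cofactor.
  apply: cvgMl_tmp; apply: (cvg_det (M := fun x => row' j (col' i (M x)))) => a b.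
  by rewrite !mxE; under eq_cvg do rewrite !mxE; apply: M_cvg.
have cvg_detV : (\det (M x))^-1 @[x --> F] --> (\det M0)^-1.
  by apply: cvgV; [rewrite -unitfE -unitmxE | apply: cvg_det].
have cvg_adjugate : (\det (M x))^-1 * \adj (M x) i j @[x --> F] --> invmx M0 i j.
  by rewrite /invmx uM0 mxE; apply: cvgM.
apply: cvg_trans cvg_adjugate; apply: near_eq_cvg.
near=> x; have uMx : M x \in unitmx by near: x; apply: near_unitmx.
by rewrite /invmx uMx [RHS]mxE.
Unshelve. all: by end_near.
Qed.

End MatrixLimits.

Section Asymptotics.
Variable R : realType.
Implicit Types (k p : R) (w : R -> R).

Lemma invr_cvg0 : x^-1 @[x --> +oo] --> (0 : R).
Proof.
apply/gtr0_cvgV0; last exact: cvg_id.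
by near=> x; near: x; apply: nbhs_pinfty_gt.
Unshelve. all: by end_near.
Qed.

Lemma ln_cvgy : @ln R x @[x --> +oo] --> +oo.
Proof.
apply/cvgryPge => M; near=> x.
have x_ge : expR M <= x by near: x; apply: nbhs_pinfty_ge; rewrite num_real.
by rewrite -ler_expR lnK // posrE (lt_le_trans (expR_gt0 M)).
Unshelve. all: by end_near.
Qed.

Lemma lnV_cvg0 : (ln x)^-1 @[x --> +oo] --> (0 : R).
Proof.
apply/gtr0_cvgV0; last exact: ln_cvgy.
near=> x; apply: ln_gt0; near: x; apply: nbhs_pinfty_gt; rewrite num_real.
Unshelve. all: by end_near.
Qed.

Lemma ln_expR1DpowR_div_ln p : 0 < p ->
  ln (expR 1 + x `^ p) / ln x @[x --> +oo] --> p.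
Proof.
move=> p_gt0.
have upper : p + ln (1 + expR 1) * (ln x)^-1 @[x --> +oo] --> p.
  rewrite -[X in _ --> X]addr0 -(mulr0 (ln (1 + expR 1))).
  by apply: cvgD; [exact: cvg_cst | apply: cvgMl_tmp; exact: lnV_cvg0].
apply: (squeeze_cvgr _ (cvg_cst p) upper); near=> x.
have x_gt1 : 1 < x by near: x; apply: nbhs_pinfty_gt; rewrite num_real.
have lnx_gt0 : 0 < ln x by apply: ln_gt0.
have xp_gt0 : 0 < x `^ p by rewrite powR_gt0 // (lt_trans ltr01).
have ln_xp : ln (x `^ p) = p * ln x by rewrite ln_powR.
have xp_ge1 : 1 <= x `^ p.
  by rewrite -(ler_ln (x := 1)) ?posrE // ln1 ln_xp mulr_ge0 // ltW.
have e_gt0 : 0 < expR 1 :> R by apply: expR_gt0.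
apply/andP; split.
  by rewrite ler_pdivlMr // -ln_xp ler_ln ?posrE ?addr_gt0 // lerDr ltW.
rewrite ler_pdivrMr // mulrDl -mulrA mulVf ?gt_eqF // mulr1 -ln_xp -lnM ?posrE ?addr_gt0 //.
by rewrite ler_ln ?posrE ?mulr_gt0 ?addr_gt0 // mulrDr mulr1 addrC lerD2l mulrC ler_pMr.
Unshelve. all: by end_near.
Qed.

Lemma long_walk_scale_cvg k p : 0 < k -> 0 < p ->
  ln (expR 1 + x `^ p) * ((x - 1) / ln x) / (k * x) @[x --> +oo] --> p / k.
Proof.
move=> k_gt0 p_gt0.
have lim : k^-1 * (ln (expR 1 + x `^ p) / ln x) * (1 - x^-1) @[x --> +oo]
    --> k^-1 * p * (1 - 0).
  apply: cvgM; first by apply: cvgMl_tmp; exact: ln_expR1DpowR_div_ln.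
  by apply: cvgB; [exact: cvg_cst | exact: invr_cvg0].
rewrite subr0 mulr1 mulrC in lim.
apply: cvg_trans lim; apply: near_eq_cvg; near=> x.
have x_gt1 : 1 < x by near: x; apply: nbhs_pinfty_gt; rewrite num_real.
have lnx_neq0 : ln x != 0 by rewrite gt_eqF // ln_gt0.
by field; rewrite lnx_neq0 !gt_eqF // (lt_trans ltr01).
Unshelve. all: by end_near.
Qed.

(* [ln (1 + y)] lies between [y / (1 + y)] and [y], and [y = w x / (k x)] tends to [0]. *)
Lemma scaled_ln_increment_cvg k w (w0 : R) : 0 < k -> w x @[x --> +oo] --> w0 ->
  k * x * (ln (k * x + w x) - ln (k * x)) @[x --> +oo] --> w0.
Proof.
move=> k_gt0 w_cvg.
have y_cvg0 : w x * (k^-1 * x^-1) @[x --> +oo] --> 0.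
  rewrite -(mulr0 w0) -(mulr0 k^-1); apply: cvgM => //.
  by apply: cvgMl_tmp; exact: invr_cvg0.
have lower : w x / (1 + w x * (k^-1 * x^-1)) @[x --> +oo] --> w0.
  rewrite -[X in _ --> X](divr1 w0); apply: cvgM => //.
  apply: cvgV; first by rewrite oner_neq0.
  by rewrite -[X in _ --> X]addr0; apply: cvgD => //; exact: cvg_cst.
apply: (squeeze_cvgr _ lower w_cvg); near=> x.
have x_gt0 : 0 < x by near: x; apply: nbhs_pinfty_gt; rewrite num_real.
have y_gt : - 2^-1 < w x * (k^-1 * x^-1) by near: x; apply: (cvgr_gt 0 y_cvg0); lra.
set y := w x * (k^-1 * x^-1) in y_gt *.
have kx_gt0 : 0 < k * x by apply: mulr_gt0.
have wE : w x = k * x * y by rewrite /y; field; rewrite !gt_eqF.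
have y1_gt0 : 0 < 1 + y by lra.
have ->: ln (k * x + w x) - ln (k * x) = ln (1 + y).
  by rewrite wE -{1}(mulr1 (k * x)) -mulrDr lnM ?posrE //; ring.
apply/andP; split; last by rewrite wE ler_pM2l // le_ln1Dx //; lra.
have ln_lower : y / (1 + y) <= ln (1 + y).
  have inv_gt0 : 0 < (1 + y)^-1 by rewrite invr_gt0.
  have /le_ln1Dx : -1 < (1 + y)^-1 - 1 by lra.
  rewrite addrCA subrr addr0 lnV ?posrE //.
  have -> : y / (1 + y) = 1 - (1 + y)^-1 by field; rewrite gt_eqF.
  lra.
by rewrite wE -mulrA ler_pM2l.
Unshelve. all: by end_near.
Qed.

(* The [ln (k x)] terms cancel in the bracket, so each logarithm can be traded for
   [scaled_ln_increment_cvg] once the prefactor is divided by [k x]. *)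
Lemma long_walk_limit k p (w1 w2 w3 : R -> R) (a1 a2 a3 : R) : 0 < k -> 0 < p ->
  w1 x @[x --> +oo] --> a1 -> w2 x @[x --> +oo] --> a2 -> w3 x @[x --> +oo] --> a3 ->
  ln (expR 1 + x `^ p) * ((x - 1) / ln x) *
    (2^-1 * (ln (k * x + w1 x) + ln (k * x + w2 x)) - ln (k * x + w3 x)) @[x --> +oo]
  --> p / k * (2^-1 * a1 + 2^-1 * a2 - a3).
Proof.
move=> k_gt0 p_gt0 w1_cvg w2_cvg w3_cvg.
pose incr w x := k * x * (ln (k * x + w x) - ln (k * x)).
have incr_cvg w (a : R) : w x @[x --> +oo] --> a -> incr w x @[x --> +oo] --> a.
  exact: scaled_ln_increment_cvg.
have lim : ln (expR 1 + x `^ p) * ((x - 1) / ln x) / (k * x) *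
    (2^-1 * incr w1 x + 2^-1 * incr w2 x - incr w3 x) @[x --> +oo]
    --> p / k * (2^-1 * a1 + 2^-1 * a2 - a3).
  apply: cvgM; first exact: long_walk_scale_cvg.
  by apply: cvgB; [apply: cvgD; apply: cvgMl_tmp |]; apply: incr_cvg.
apply: cvg_trans lim; apply: near_eq_cvg; near=> x.
have x_gt1 : 1 < x by near: x; apply: nbhs_pinfty_gt; rewrite num_real.
have x_gt0 : 0 < x := lt_trans ltr01 x_gt1.
by rewrite /incr; field; rewrite !gt_eqF ?ln_gt0.
Unshelve. all: by end_near.
Qed.

End Asymptotics.

Section LongWalk.
Variables (R : realType) (n : nat) (A : 'M[R]_n) (c : R).
Hypotheses (n_gt0 : (0 < n)%N) (symA : A^T = A) (A_ge0 : forall i j, 0 <= A i j)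
  (rowsumA : forall i, \sum_j A i j = c) (c_gt0 : 0 < c)
  (kerL : forall v : 'rV[R]_n, v *m laplacian A = 0 -> forall i j, v 0 i = v 0 j).

Local Notation L := (laplacian A).
Local Notation J := (avg_mx R n).
Local Notation X := (lap_pinv (laplacian A)).

Let symL : L^T = L. Proof. exact: laplacian_sym. Qed.
Let rowsumL := @laplacian_rowsum R n A.
Let LE : L = c%:M - A. Proof. exact: laplacian_const_rowsum. Qed.
Let c_neq0 : c != 0. Proof. by rewrite gt_eqF. Qed.

Let t (x : R) := (c + x^-1)^-1.
Let M (x : R) := t x *: L + (1 - t x * c) *: (1%:M - J) + J.

Let t_cvg : t x @[x --> +oo] --> c^-1.
Proof.
apply: cvgV => //; rewrite -[X in _ --> X]addr0.
by apply: cvgD; [exact: cvg_cst | exact: invr_cvg0].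
Qed.

Let M0E : (c^-1 *: L + J) *m (c *: X + J) = 1%:M.
Proof. exact: mulmx_scale_addJ. Qed.

Let M_cvg a b : M x a b @[x --> +oo] --> (c^-1 *: L + J) a b.
Proof.
have entry (P Q : 'M[R]_n) u v : (u *: P + v *: Q + J) a b = u * P a b + v * Q a b + J a b.
  by rewrite !mxE.
have -> : (c^-1 *: L + J) a b = c^-1 * L a b + (1 - c^-1 * c) * (1%:M - J) a b + J a b.
  by rewrite mulVf // subrr mul0r addr0 !mxE.
under eq_cvg do rewrite entry.
apply: cvgD; last exact: cvg_cst.
apply: cvgD; apply: cvgMr_tmp; first exact: t_cvg.
by apply: cvgB; [exact: cvg_cst | apply: cvgMr_tmp; exact: t_cvg].
Qed.

Lemma invmx_M_cvg a b : invmx (M x) a b @[x --> +oo] --> (c *: X + J) a b.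
Proof.
by rewrite -(mulmx1_invmx M0E); apply: (cvg_invmx M_cvg); case: (mulmx1_unit M0E).
Qed.

Lemma near_resolvent_entry : \forall x \near +oo, forall a b,
  invmx (1%:M - (spectral_radius A + x^-1)^-1 *: A) a b = c / n%:R * x + invmx (M x) a b.
Proof.
have uM : \forall x \near +oo, M x \in unitmx.
  by apply: near_unitmx M_cvg _; case: (mulmx1_unit M0E).
near=> x => a b.
have x_gt0 : 0 < x by near: x; apply: nbhs_pinfty_gt; rewrite num_real.
have s_eq : 1 - t x * c = (c * x + 1)^-1.
  by rewrite /t; field; rewrite !gt_eqF ?addr_gt0 ?mulr_gt0 ?invr_gt0.
have -> : 1%:M - (spectral_radius A + x^-1)^-1 *: A = 1%:M - t x *: (c%:M - L).
  by rewrite (spectral_radius_const_rowsum symA A_ge0 rowsumA n_gt0) LE subKr.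
rewrite invmx_resolvent //; last first.
- by near: x.
- by rewrite s_eq invr_eq0 gt_eqF ?addr_gt0 ?mulr_gt0.
by rewrite s_eq invrK !mxE avg_mxE /M s_eq addrK mulrAC.
Unshelve. all: by end_near.
Qed.

Lemma long_walk_expr_cvg i j :
  long_walk_expr A i j x @[x --> +oo] --> X i i - X i j - X j i + X j j.
Proof.
have n_neq0 : n%:R != 0 :> R by rewrite pnatr_eq0 -lt0n.
have k_gt0 : 0 < c / n%:R by rewrite divr_gt0 ?ltr0n.
have p_gt0 : 0 < 2 / n%:R :> R by rewrite divr_gt0 ?ltr0n.
have lim := long_walk_limit k_gt0 p_gt0 (@invmx_M_cvg i i)
  (@invmx_M_cvg j j) (@invmx_M_cvg i j).
have -> : X i i - X i j - X j i + X j j = 2 / n%:R / (c / n%:R) *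
    (2^-1 * (c *: X + J) i i + 2^-1 * (c *: X + J) j j - (c *: X + J) i j).
  have /matrixP symX := trmx_lap_pinv symL.
  move: X symX => Y symY; rewrite !mxE !avg_mxE -[Y j i]symY mxE.
  by field; rewrite n_neq0 c_neq0.
apply: cvg_trans lim; apply: near_eq_cvg; near=> x.
have resolventE : forall a b, invmx (1%:M - (spectral_radius A + x^-1)^-1 *: A) a b
    = c / n%:R * x + invmx (M x) a b by near: x; exact: near_resolvent_entry.
by rewrite /long_walk_expr /= !resolventE.
Unshelve. all: by end_near.
Qed.

End LongWalk.

Lemma balance_graph_pos_weights (R : realType) n (E Et : seq (edge R n)) :
  pos_weights E -> is_balance_graph E Et -> pos_weights Et.
Proof.
move=> wE [loops [loops_gt0 -> _]] e; rewrite mem_cat => /orP[/wE //|].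
by case/mapP=> l /loops_gt0 ? ->.
Qed.

Lemma balance_graph_laplacian (R : realType) n (E Et : seq (edge R n)) :
  is_balance_graph E Et -> laplacian (adjmx Et) = laplacian (adjmx E).
Proof.
by case=> loops [_ -> _]; rewrite adjmx_cat laplacianD_diag // => i j; apply: adjmx_loops.
Qed.

(* If [c = 0] then [A = 0], and the Laplacian kernel contains non-constant vectors. *)
Lemma const_rowsum_gt0 (R : realType) n (A : 'M[R]_n) c :
  (1 < n)%N -> (forall i j, 0 <= A i j) -> (forall i, \sum_j A i j = c) ->
  (forall v : 'rV[R]_n, v *m laplacian A = 0 -> forall i j, v 0 i = v 0 j) -> 0 < c.
Proof.
move=> n_gt1 A_ge0 rowsumA kerL.
have c_ge0 : 0 <= c by rewrite -(rowsumA (Ordinal (ltnW n_gt1))) sumr_ge0.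
rewrite lt_def c_ge0 andbT; apply/negP => /eqP c0.
have A0 : A = 0.
  apply/matrixP => i j; rewrite mxE; have /eqP := rowsumA i.
  by rewrite c0 psumr_eq0 // => /allP /(_ j (mem_index_enum j)) /eqP.
pose i0 := Ordinal (ltnW n_gt1); pose i1 := Ordinal n_gt1.
have L0 : laplacian A = 0.
  by apply/matrixP => a b; rewrite (laplacian_const_rowsum rowsumA) A0 c0 !mxE mul0rn subr0.
have /kerL/(_ i0 i1) : (delta_mx 0 i0 : 'rV[R]_n) *m laplacian A = 0.
  by rewrite L0 mulmx0.
by rewrite !mxE eqxx /= => /eqP; rewrite oner_eq0.
Qed.

Unset Implicit Arguments.

Theorem corollary7 (R : realType) (n : nat) (E Et : seq (edge R n)) :
  (2 <= n)%N ->
  pos_weights E ->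
  connected_graph E ->
  is_balance_graph E Et ->
  forall i j : 'I_n, long_walk_dist_is Et i j (resistance_dist E i j).
Proof.
move=> n_ge2 wE connE balEt i j.
have n_gt0 : (0 < n)%N := ltnW n_ge2.
have [_ [_ _ [c rowsumEt]]] := balEt.
have kerL : forall v : 'rV[R]_n, v *m laplacian (adjmx Et) = 0 -> forall a b, v 0 a = v 0 b.
  by rewrite (balance_graph_laplacian balEt) => v; apply: laplacian_ker_const.
have Et_ge0 a b : 0 <= adjmx Et a b.
  exact/adjmx_ge0/(balance_graph_pos_weights wE balEt).
have c_gt0 := const_rowsum_gt0 n_ge2 Et_ge0 rowsumEt kerL.
rewrite /long_walk_dist_is resistance_dist_lap_pinv // -(balance_graph_laplacian balEt).
exact: long_walk_expr_cvg (trmx_adjmx Et) Et_ge0 rowsumEt c_gt0 kerL i j.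
Qed.
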